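(* Let $\mathcal{L}=(L,\wedge,\vee,0,1)$ be a complete lattice and let $p\in L$ with $\Omega(p)\neq\emptyset$. The following are equivalent: (a) $p$ is strongly irreducible in $L$; (a') $L\setminus[0,p]$ is closed under $\wedge$; (b) $\Omega(p)$ is closed under $\wedge$, and for every $a\in L\setminus[0,p]$ there exists $y\in\Omega(p)$ with $y\leq a$; (c) $p$ is a pseudo-complement of some element $q$ of $L$ such that $[0,q]$ is uniform; (d) for every $q\in\Omega(p)$, $p$ is a pseudo-complement of $q$ in $L$ and $[0,q]$ is uniform; (e) $p$ is irreducible and weakly $\wedge$-distributive in $L$.
   Context: An element $p$ of a lower semilattice is irreducible if for all $a,b$ with $p\leq a,b$: $a\wedge b\leq p$ implies $a\leq p$ or $b\leq p$; strongly irreducible if this holds for all $a,b$. $[a,b]=\{x\mid a\leq x\leq b\}$. For $p\in L$, $\Omega(p)=\{x\in L\setminus\{0\}\mid p\wedge x=0\}$. A lower semilattice with least element $0$ is uniform if $x\wedge y=0$ implies $x=0$ or $y=0$. A pseudo-complement of $a$ in $L$ is the greatest $x\in L$ with $a\wedge x=0$. An element $p$ is weakly $\wedge$-distributive if whenever $x\wedge y=0$ one has $p=(x\vee p)\wedge(y\vee p)$. *)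

From HB Require Import structures.
From mathcomp Require Import all_boot all_order.
Set Implicit Arguments. Unset Strict Implicit. Unset Printing Implicit Defensive.
Import Order.TTheory.
Local Open Scope order_scope.

Section Defs.
Context {disp : Order.disp_t} {L : tbLatticeType disp}.

Definition complete_lattice : Prop :=
  forall S : L -> Prop, exists s : L,
    (forall x, S x -> x <= s) /\ (forall u, (forall x, S x -> x <= u) -> s <= u).

Definition irreducible (p : L) : Prop :=
  forall a b : L, p <= a -> p <= b -> a `&` b <= p -> a <= p \/ b <= p.

Definition strongly_irreducible (p : L) : Prop :=
  forall a b : L, a `&` b <= p -> a <= p \/ b <= p.

Definition interval (a b : L) (x : L) : Prop := a <= x /\ x <= b.

Definition Omega (p : L) (x : L) : Prop := x <> \bot /\ p `&` x = \bot.

Definition uniform_below (q : L) : Prop :=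
  forall x y : L, interval \bot q x -> interval \bot q y ->
    x `&` y = \bot -> x = \bot \/ y = \bot.

Definition pseudo_complement (x a : L) : Prop :=
  a `&` x = \bot /\ (forall z : L, a `&` z = \bot -> z <= x).

Definition weakly_meet_distributive (p : L) : Prop :=
  forall x y : L, x `&` y = \bot -> p = (x `|` p) `&` (y `|` p).

End Defs.

(* Everything goes through the property "x `&` y = 0 implies x <= p or y <= p",
   which follows both from strong irreducibility and from irreducibility plus weak
   meet-distributivity (apply irreducibility to x `|` p and y `|` p).  Given that
   property, any q in Omega(p) has p as pseudo-complement (q `&` z = 0 forces z <= p,
   as q <= p is excluded) and [0, q] is uniform (x `&` y = 0 below q forces x or y
   below p `&` q = 0).  Conversely, if p is the pseudo-complement of q with [0, q]
   uniform and a `&` b <= p, then q `&` a and q `&` b are disjoint. *)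
From HB Require Import structures.
From mathcomp Require Import all_boot all_order.
Import Order.TTheory.
Local Open Scope order_scope.

Definition disjoint_prime {disp : Order.disp_t} {L : tbLatticeType disp} (p : L) : Prop :=
  forall x y : L, x `&` y = \bot -> x <= p \/ y <= p.

Section StronglyIrreducible.
Context {disp : Order.disp_t} {L : tbLatticeType disp}.
Implicit Types (p q x y z : L).

Lemma interval_botE p x : interval \bot p x <-> x <= p.
Proof. by split=> [[]//|xp]; split; rewrite ?le0x. Qed.

Lemma Omega_le_meet {p q x} : Omega p q -> x <= q -> x <= p -> x = \bot.
Proof. by case=> _ pq0 xq xp; apply/eqP; rewrite -lex0 -pq0 lexI xp. Qed.

Lemma Omega_not_le {p q} : Omega p q -> ~ q <= p.
Proof. by move=> Oq qp; case: (Oq) => + _; apply; apply: Omega_le_meet Oq _ qp. Qed.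

Lemma strongly_irreducibleP p :
  strongly_irreducible p <->
  forall x y, ~ x <= p -> ~ y <= p -> ~ x `&` y <= p.
Proof.
split=> [si x y xp yp /si[]//|si x y xyp].
have [xp|/negP xp] := boolP (x <= p); first by left.
have [yp|/negP yp] := boolP (y <= p); first by right.
by case: (si x y xp yp xyp).
Qed.

Lemma strongly_irreducible_Omega_meet p x y :
  strongly_irreducible p -> Omega p x -> Omega p y -> Omega p (x `&` y).
Proof.
move=> si Ox Oy; split.
  move=> xy0; have /si[] : x `&` y <= p by rewrite xy0 le0x.
    exact: Omega_not_le Ox.
  exact: Omega_not_le Oy.
by case: Ox => _ px0; apply/eqP; rewrite -lex0 -px0 meetA leIl.
Qed.

Lemma strongly_irreducible_Omega_below p q x :
  strongly_irreducible p -> Omega p q -> ~ x <= p -> Omega p (x `&` q).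
Proof.
move=> si Oq xp; split.
  move=> xq0; have /si[] : x `&` q <= p by rewrite xq0 le0x.
    exact: xp.
  exact: Omega_not_le Oq.
by case: Oq => _ pq0; apply/eqP; rewrite -lex0 -pq0 meetCA leIr.
Qed.

Lemma Omega_meet_below_strongly_irreducible p :
  (forall x y, Omega p x -> Omega p y -> Omega p (x `&` y)) ->
  (forall x, ~ x <= p -> exists2 y, Omega p y & y <= x) ->
  strongly_irreducible p.
Proof.
move=> meetO belowO; apply/strongly_irreducibleP => x y xp yp xyp.
have [u Ou ux] := belowO x xp; have [v Ov vy] := belowO y yp.
exact: Omega_not_le (meetO u v Ou Ov) (le_trans (leI2 ux vy) xyp).
Qed.

Lemma strongly_irreducible_disjoint_prime p :
  strongly_irreducible p -> disjoint_prime p.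
Proof. by move=> si x y xy0; apply: si; rewrite xy0 le0x. Qed.

Lemma irreducible_weakly_distributive_disjoint_prime p :
  irreducible p -> weakly_meet_distributive p -> disjoint_prime p.
Proof.
move=> irr wmd x y /wmd pE.
have /irr[] : (x `|` p) `&` (y `|` p) <= p by rewrite -pE.
- exact: leUr.
- exact: leUr.
- by rewrite leUx => /andP[]; left.
- by rewrite leUx => /andP[]; right.
Qed.

Lemma disjoint_prime_Omega p q : disjoint_prime p -> Omega p q ->
  pseudo_complement p q /\ uniform_below q.
Proof.
move=> dp Oq; split; first split.
- by case: Oq => _; rewrite meetC.
- by move=> z /dp[] // /(Omega_not_le Oq).
- move=> x y /interval_botE xq /interval_botE yq /dp[] ?;
    [left | right]; exact: Omega_le_meet Oq _ _.
Qed.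

Lemma pseudo_complement_uniform_strongly_irreducible p q :
  pseudo_complement p q -> uniform_below q -> strongly_irreducible p.
Proof.
move=> [qp0 pc] uq a b abp.
have qI c : interval \bot q (q `&` c) by split; rewrite ?le0x ?leIl.
have disj : (q `&` a) `&` (q `&` b) = \bot.
  apply/eqP; rewrite -lex0 -qp0 lexI (le_trans (leIl _ _) (leIl _ _)).
  exact: le_trans (leI2 (leIr _ _) (leIr _ _)) abp.
by case: (uq _ _ (qI a) (qI b) disj) => /pc; [left | right].
Qed.

Lemma strongly_irreducible_weakly_distributive p :
  strongly_irreducible p -> weakly_meet_distributive p.
Proof.
move=> /strongly_irreducible_disjoint_prime dp x y /dp[] /join_idPr ->.
- by apply/esym/meet_idPl; exact: leUr.
- by apply/esym/meet_idPr; exact: leUr.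
Qed.

End StronglyIrreducible.

Theorem lemma1p15 (disp : Order.disp_t) (L : tbLatticeType disp) (p : L)
    (Lcomplete : complete_lattice (L := L))
    (Omega_ne : exists x : L, Omega p x) :
  let a  := strongly_irreducible p in
  let a' := forall x y : L, ~ interval \bot p x -> ~ interval \bot p y ->
              ~ interval \bot p (x `&` y) in
  let b  := (forall x y : L, Omega p x -> Omega p y -> Omega p (x `&` y)) /\
            (forall x : L, ~ interval \bot p x -> exists2 y, Omega p y & y <= x) in
  let c  := exists q : L, pseudo_complement p q /\ uniform_below q in
  let d  := forall q : L, Omega p q -> pseudo_complement p q /\ uniform_below q in
  let e  := irreducible p /\ weakly_meet_distributive p in
  (a <-> a') /\ (a <-> b) /\ (a <-> c) /\ (a <-> d) /\ (a <-> e).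
Proof.
move=> a a' b c d e; have [q0 Oq0] := Omega_ne.
have ad : a -> d by move=> si q; apply/disjoint_prime_Omega/strongly_irreducible_disjoint_prime.
have ca : c -> a by case=> q []; apply: pseudo_complement_uniform_strongly_irreducible.
have da : d -> a by move=> /(_ q0 Oq0) pcq; apply: ca; exists q0.
split; [|split; [|split; [|split]]].
- split=> [/strongly_irreducibleP|] si; last apply/strongly_irreducibleP;
    by move=> x y xp yp /interval_botE; apply: si => /interval_botE.
- split=> [si|[meetO belowO]].
    split=> [x y|x /interval_botE xp]; first exact: strongly_irreducible_Omega_meet.
    by exists (x `&` q0); [exact: strongly_irreducible_Omega_below | exact: leIl].
  apply: Omega_meet_below_strongly_irreducible => // x xp.
  by apply: belowO => /interval_botE.
- by split=> // si; exists q0; apply: ad.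
- by split.
- split=> [si|[irr wmd]]; last first.
    by apply: da => q; apply/disjoint_prime_Omega/irreducible_weakly_distributive_disjoint_prime.
  by split; [move=> x y _ _; exact: si | exact: strongly_irreducible_weakly_distributive].
Qed.
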